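(* Let $\approx$ be an equivalence relation on $\mathbb W$ satisfying: for all $A,B\in\mathbb W$, $A\approx B$ iff $A\setminus B\approx B\setminus A$. Let $A,B,A',B'\in\mathbb W$ with $B\subseteq A$, $B'\subseteq A'$ and $B\approx B'$. Then $A\setminus B\approx A'\setminus B'$ if and only if $A\approx A'$.
   Context: Let $\mathbb N=\{0,1,2,\dots\}$. $\mathbb{W}$ is the family of finitary point sets: sets $A\subseteq\bigcup_{k\ge1}\mathbb N^k$ of finite tuples of natural numbers such that for every $n\in\mathbb N$ there is $h$ with $A\cap\{0,\dots,n\}^k=\emptyset$ for all $k>h$. *)

From Stdlib Require Import List Arith.
Import ListNotations.

Definition point_set := list nat -> Prop.

Definition psubset (A B : point_set) : Prop := forall x, A x -> B x.
Definition pdiff (A B : point_set) : point_set := fun x => A x /\ ~ B x.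

(* A is finitary: A consists of tuples of length k >= 1, and for every n
   there is h such that A meets no {0,...,n}^k with k > h. *)
Definition in_W (A : point_set) : Prop :=
  (forall x, A x -> 1 <= length x) /\
  forall n : nat, exists h : nat, forall x : list nat,
    A x -> h < length x -> ~ (forall i, In i x -> i <= n).

Definition equiv_on_W (R : point_set -> point_set -> Prop) : Prop :=
  (forall A, in_W A -> R A A) /\
  (forall A B, in_W A -> in_W B -> R A B -> R B A) /\
  (forall A B C, in_W A -> in_W B -> in_W C -> R A B -> R B C -> R A C).

From Stdlib Require Import Lia Classical FunctionalExtensionality PropExtensionality.

(* Write a := A \ B and D := a ∩ B'.  Since D lies in both A and A', removing it
   does not change A \ A' or A' \ A, so A ≈ A' iff A \ D ≈ A' \ D.  The set
   M := a ∪ B' sits between them: (A \ D, M) has the same pair of differences as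
   (B, B'), and (M, A' \ D) the same as (a, a'), where a' := A' \ B'.  As the
   hypothesis on ≈ says that A ≈ B depends only on the pair (A \ B, B \ A),
   transitivity through M gives the claim. *)

Definition punion (A B : point_set) : point_set := fun x => A x \/ B x.
Definition pinter (A B : point_set) : point_set := fun x => A x /\ B x.

Lemma point_set_ext (A B : point_set) : (forall x, A x <-> B x) -> A = B.
Proof.
  intros AB; apply functional_extensionality; intros x.
  apply propositional_extensionality, AB.
Qed.

Lemma in_W_subset (A B : point_set) : in_W B -> psubset A B -> in_W A.
Proof.
  intros [B_len B_fin] AB; split.
  - intros x Ax; apply B_len, AB, Ax.
  - intros n; destruct (B_fin n) as [h Bh]; exists h.
    intros x Ax; apply Bh, AB, Ax.
Qed.

Lemma in_W_pdiff (A B : point_set) : in_W A -> in_W (pdiff A B).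
Proof. intros WA; apply (in_W_subset _ A WA); intros x [Ax _]; exact Ax. Qed.

Lemma in_W_punion (A B : point_set) : in_W A -> in_W B -> in_W (punion A B).
Proof.
  intros [A_len A_fin] [B_len B_fin]; split.
  - intros x [Ax | Bx]; auto.
  - intros n; destruct (A_fin n) as [h Ah], (B_fin n) as [k Bk].
    exists (max h k); intros x [Ax | Bx] Hlen.
    + apply Ah; [exact Ax | lia].
    + apply Bk; [exact Bx | lia].
Qed.

Section DifferenceInvariance.

Variable R : point_set -> point_set -> Prop.
Hypothesis R_equiv : equiv_on_W R.
Hypothesis R_diff : forall A B, in_W A -> in_W B ->
  (R A B <-> R (pdiff A B) (pdiff B A)).

Lemma R_congr_pdiff (A B C D : point_set) :
  in_W A -> in_W B -> in_W C -> in_W D ->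
  (forall x, pdiff A B x <-> pdiff C D x) ->
  (forall x, pdiff B A x <-> pdiff D C x) ->
  (R A B <-> R C D).
Proof.
  intros WA WB WC WD AB_CD BA_DC.
  rewrite (R_diff A B WA WB), (R_diff C D WC WD).
  rewrite (point_set_ext _ _ AB_CD), (point_set_ext _ _ BA_DC).
  reflexivity.
Qed.

Lemma R_pdiff_common (A B D : point_set) :
  in_W A -> in_W B -> psubset D A -> psubset D B ->
  (R (pdiff A D) (pdiff B D) <-> R A B).
Proof.
  intros WA WB DA DB.
  apply R_congr_pdiff; auto using in_W_pdiff;
    intros x; unfold pdiff; specialize (DA x); specialize (DB x); tauto.
Qed.

Section Decomposition.

Variables A B A' B' : point_set.
Hypotheses (WA : in_W A) (WB : in_W B) (WA' : in_W A') (WB' : in_W B').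
Hypotheses (BA : psubset B A) (BA' : psubset B' A').

Let M : point_set := punion (pdiff A B) B'.
Let D : point_set := pinter (pdiff A B) B'.

Ltac solve_pointwise :=
  intros x; unfold M, D, pinter, punion, pdiff;
  generalize (BA x) (BA' x);
  destruct (classic (A x)), (classic (B x)), (classic (A' x)), (classic (B' x));
  tauto.

Let WM : in_W M.
Proof. apply in_W_punion; auto using in_W_pdiff. Qed.

Lemma R_AD_M_iff : R (pdiff A D) M <-> R B B'.
Proof. apply R_congr_pdiff; auto using in_W_pdiff; solve_pointwise. Qed.

Lemma R_M_A'D_iff : R M (pdiff A' D) <-> R (pdiff A B) (pdiff A' B').
Proof. apply R_congr_pdiff; auto using in_W_pdiff; solve_pointwise. Qed.

Lemma R_AD_A'D_iff : R (pdiff A D) (pdiff A' D) <-> R A A'.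
Proof. apply R_pdiff_common; auto; solve_pointwise. Qed.

Let WAD : in_W (pdiff A D).
Proof. apply in_W_pdiff, WA. Qed.

Let WAD' : in_W (pdiff A' D).
Proof. apply in_W_pdiff, WA'. Qed.

Lemma R_pdiff_iff : R B B' -> (R (pdiff A B) (pdiff A' B') <-> R A A').
Proof.
  destruct R_equiv as [_ [R_sym R_trans]]; intros RBB'.
  rewrite <- R_AD_A'D_iff, <- R_M_A'D_iff.
  apply R_AD_M_iff in RBB'.
  split; intros R2.
  - exact (R_trans _ _ _ WAD WM WAD' RBB' R2).
  - exact (R_trans _ _ _ WM WAD WAD' (R_sym _ _ WAD WM RBB') R2).
Qed.

End Decomposition.

End DifferenceInvariance.

Theorem lemma1p6 (R : point_set -> point_set -> Prop) :
  equiv_on_W R ->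
  (forall A B, in_W A -> in_W B -> (R A B <-> R (pdiff A B) (pdiff B A))) ->
  forall A B A' B' : point_set,
    in_W A -> in_W B -> in_W A' -> in_W B' ->
    psubset B A -> psubset B' A' -> R B B' ->
    (R (pdiff A B) (pdiff A' B') <-> R A A').
Proof.
  intros R_equiv R_diff A B A' B' WA WB WA' WB' BA BA'.
  exact (R_pdiff_iff R R_equiv R_diff A B A' B' WA WB WA' WB' BA BA').
Qed.
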